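(* Let $C,D\subseteq\mathbb{R}^n$ be convex cones (nonempty, closed under addition and multiplication by nonnegative reals) that are closed and have nonempty interior in the Euclidean topology, and suppose $\langle c,d\rangle\ge0$ for all $c\in C$, $d\in D$, where $\langle\cdot,\cdot\rangle$ is the standard inner product. Equip $D$ with the weak upper topology $w(D,C)$. Then for every linear functional $\varphi\colon D\to[0,\infty)$ which is lower semicontinuous with respect to $w(D,C)$ there is a unique $x\in C$ such that $\varphi(y)=\langle x,y\rangle$ for all $y\in D$.
   Context: $[0,\infty)$ and $\overline{\mathbb{R}}_+=[0,+\infty]$ carry the upper topology, whose open sets are $\emptyset$, the whole space and the intervals $\{t\mid t>r\}$ for $r\in[0,\infty)$; a function is lower semicontinuous if it is continuous into this topology. The weak upper topology $w(D,C)$ on $D$ is the coarsest topology making all maps $y\mapsto\langle x,y\rangle$, $x\in C$, lower semicontinuous. A functional $\varphi\colon D\to[0,\infty)$ is linear if $\varphi(y+z)=\varphi(y)+\varphi(z)$ and $\varphi(ry)=r\varphi(y)$ for all $y,z\in D$, $r\ge0$. *)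

From Stdlib Require Import Reals.
From mathcomp Require Import all_boot.
Set Implicit Arguments. Unset Strict Implicit. Unset Printing Implicit Defensive.
Local Open Scope R_scope.

Definition vec (n : nat) := 'I_n -> R.

Definition vadd n (x y : vec n) : vec n := fun i => (x i + y i).
Definition vscale n (r : R) (x : vec n) : vec n := fun i => (r * x i).

Definition inner n (x y : vec n) : R := \big[Rplus/R0]_(i < n) (x i * y i).

Definition dist n (x y : vec n) : R :=
  sqrt (inner (fun i => x i - y i) (fun i => x i - y i)).

Definition convex_cone n (C : vec n -> Prop) : Prop :=
  (exists x, C x) /\
  (forall x y, C x -> C y -> C (vadd x y)) /\
  (forall r x, (0 <= r) -> C x -> C (vscale r x)).

Definition eclosed n (C : vec n -> Prop) : Prop :=
  forall x, (forall eps, (0 < eps) -> exists y, C y /\ (dist x y < eps)) -> C x.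

Definition has_interior n (C : vec n -> Prop) : Prop :=
  exists x eps, (0 < eps) /\ forall y, (dist x y < eps) -> C y.

(* Subbasic open sets of the weak upper topology w(D,C) on D:
   preimages under y |-> <x,y> (x in C) of the upper-topology open sets,
   i.e. D, empty, and {y in D | <x,y> > r} for r >= 0.
   A set U ⊆ D is w(D,C)-open iff every point of U has a basic neighbourhood
   (finite intersection of subbasic sets) contained in U. *)
Definition wopen n (C D : vec n -> Prop) (U : vec n -> Prop) : Prop :=
  (forall y, U y -> D y) /\
  forall y, U y ->
    exists l : list (vec n * R),
      (forall p, List.In p l -> C (fst p) /\ (0 <= snd p)) /\
      (forall p, List.In p l -> (snd p < inner (fst p) y)) /\
      (forall z, D z -> (forall p, List.In p l -> (snd p < inner (fst p) z)) -> U z).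

(* phi : D -> [0,oo) is lower semicontinuous w.r.t. w(D,C), where [0,oo]
   carries the upper topology (open sets: empty, whole, {t | t > r}, r >= 0). *)
Definition wlsc n (C D : vec n -> Prop) (phi : vec n -> R) : Prop :=
  forall r, (0 <= r) -> wopen C D (fun y => D y /\ (r < phi y)).

Definition linear_on n (D : vec n -> Prop) (phi : vec n -> R) : Prop :=
  (forall y z, D y -> D z -> phi (vadd y z) = (phi y + phi z)) /\
  (forall r y, (0 <= r) -> D y -> phi (vscale r y) = (r * phi y)).

(* Let y0 be an interior point of D and delta > 0 small.  Every y in D satisfies
   y + (sum_i a_i) y0 = sum_i a_i (y0 + s_i e_i) with a_i >= 0 and s_i = +-delta,
   so additivity and positive homogeneity force phi = <x, .> on D, where x is the
   vector of difference quotients of phi at y0; the points y0 and y0 + delta e_i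
   also give uniqueness.  If x were not in C, projecting x onto the closed convex
   cone C yields v with <c, v> >= 0 on C and <x, v> < 0.  Then z = y0 + t v lies
   in D with phi z < phi y0, while every basic w(D,C)-neighbourhood
   {y | <c_k, y> > r_k} of y0 contains z; this contradicts lower semicontinuity
   of phi at level phi z. *)

From HB Require Import structures.
From Pilot Require Import Defs.
From Stdlib Require Import Reals Lra Psatz Classical ClassicalEpsilon FunctionalExtensionality.
From mathcomp Require Import all_boot.
Set Implicit Arguments. Unset Strict Implicit.
Local Open Scope R_scope.

HB.instance Definition _ :=
  Monoid.isComLaw.Build R R0 Rplus (fun a b c => esym (Rplus_assoc a b c)) Rplus_comm Rplus_0_l.

Lemma big_Rmult_distrr (I : Type) (r : seq I) (a : R) (F : I -> R) :
  \big[Rplus/R0]_(i <- r) (a * F i) = a * \big[Rplus/R0]_(i <- r) F i.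
Proof. by elim: r => [|b r IH]; rewrite ?big_nil ?big_cons ?IH; ring. Qed.

Lemma big_Rplus_ge0 (I : Type) (r : seq I) (F : I -> R) :
  (forall i, 0 <= F i) -> 0 <= \big[Rplus/R0]_(i <- r) F i.
Proof. by move=> F_ge0; apply: big_ind => // [|a b]; lra. Qed.

Lemma big_Rplus_cvg (I : Type) (r : seq I) (F : nat -> I -> R) (G : I -> R) :
  (forall i, Un_cv (F^~ i) (G i)) ->
  Un_cv (fun m => \big[Rplus/R0]_(i <- r) F m i) (\big[Rplus/R0]_(i <- r) G i).
Proof.
move=> FG; elim: r => [|b r IH].
  rewrite big_nil => e e_gt0; exists 0%nat => m _.
  by rewrite big_nil /Rdist Rminus_0_r Rabs_R0.
under [fun m => _]functional_extensionality => m do rewrite big_cons.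
by rewrite big_cons; apply: CV_plus.
Qed.

Definition vsub n (a b : vec n) : vec n := vadd a (vscale (-1) b).
Definition sqnorm n (w : vec n) : R := inner w w.
Definition basis_vec n (i : 'I_n) : vec n := fun j => if i == j then 1 else 0.
Definition vsum n (I : Type) (r : seq I) (F : I -> vec n) : vec n :=
  fun j => \big[Rplus/R0]_(i <- r) F i j.

(* Both sides must be sums of terms [a * inner u v] (scalar on the left), which
   [-big_Rmult_distrr] and [-big_split] then merge into a single sum. *)
Ltac inner_ring := rewrite /sqnorm /inner -?big_Rmult_distrr -?big_split;
  apply: eq_bigr => ? _; rewrite /vsub /vadd /vscale /=; first [ring | field].

Section InnerProduct.
Variable n : nat.
Implicit Types a b c w : vec n.

Lemma inner_addr a b c : inner a (vadd b c) = inner a b + inner a c.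
Proof. by inner_ring. Qed.

Lemma inner_scaler s a b : inner a (vscale s b) = s * inner a b.
Proof. by inner_ring. Qed.

Lemma big_basis_vec a (j : 'I_n) : \big[Rplus/R0]_(i < n) (a i * basis_vec i j) = a j.
Proof.
rewrite (bigD1 j) //= big1 => [|i ij]; rewrite /basis_vec ?eqxx; first ring.
by rewrite (negbTE ij); ring.
Qed.

Lemma inner_basis a (i : 'I_n) : inner a (basis_vec i) = a i.
Proof.
rewrite /inner -big_basis_vec; apply: eq_bigr => j _.
by rewrite /basis_vec eq_sym.
Qed.

Lemma sqnorm_ge0 w : 0 <= sqnorm w.
Proof. by apply: big_Rplus_ge0 => i; nra. Qed.

Lemma sqr_le_sqnorm w (i : 'I_n) : w i * w i <= sqnorm w.
Proof.
rewrite /sqnorm /inner (bigD1 i) //= -[X in X <= _]Rplus_0_r.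
by apply: Rplus_le_compat_l; apply: big_ind => [|x y|j _]; nra.
Qed.

Lemma sqnorm_basis (i : 'I_n) : sqnorm (basis_vec i) = 1.
Proof. by rewrite /sqnorm inner_basis /basis_vec eqxx. Qed.

Lemma sqnorm_sub_eq0 a b : sqnorm (vsub a b) = 0 -> a = b.
Proof.
move=> ab0; apply: functional_extensionality => i.
by have := sqr_le_sqnorm (vsub a b) i; rewrite ab0 /vsub /vadd /vscale; nra.
Qed.

Lemma dist_sqnorm a b : Defs.dist a b = sqrt (sqnorm (vsub a b)).
Proof.
rewrite /Defs.dist /sqnorm; do 2 f_equal; apply: functional_extensionality => i.
all: by rewrite /vsub /vadd /vscale; ring.
Qed.

Lemma dist_lt a b e : 0 < e -> sqnorm (vsub a b) < e * e -> Defs.dist a b < e.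
Proof.
move=> e_gt0 ab_lt; rewrite dist_sqnorm -(sqrt_square e); last lra.
by apply: sqrt_lt_1_alt; have := sqnorm_ge0 (vsub a b); lra.
Qed.

Lemma sqnorm_sub_diag a : sqnorm (vsub a a) = 0.
Proof. by rewrite /sqnorm /inner big1 // => i _; rewrite /vsub /vadd /vscale; ring. Qed.

Lemma parallelogram a b c :
  sqnorm (vsub b c) + 4 * sqnorm (vsub a (vscale (/2) (vadd b c))) =
  2 * sqnorm (vsub a b) + 2 * sqnorm (vsub a c).
Proof. by inner_ring. Qed.

End InnerProduct.

Lemma cvg_const (l : R) : Un_cv (fun _ => l) l.
Proof. by move=> e e_gt0; exists 0%nat => m _; rewrite /Rdist Rminus_diag Rabs_R0. Qed.

Definition vcvg n (w : nat -> vec n) (p : vec n) : Prop :=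
  forall i, Un_cv (fun m => w m i) (p i).

Section VectorSequences.
Variable n : nat.
Implicit Types (w : nat -> vec n) (a p : vec n).

Lemma vcvg_sqnorm_sub w p a :
  vcvg w p -> Un_cv (fun m => sqnorm (vsub a (w m))) (sqnorm (vsub a p)).
Proof.
move=> wp; apply: (@big_Rplus_cvg _ _ (fun m i => vsub a (w m) i * vsub a (w m) i)) => i.
have a_wi : Un_cv (fun m => vsub a (w m) i) (vsub a p i).
  by apply: CV_plus; [exact: cvg_const | apply: CV_mult; [exact: cvg_const | exact: wp]].
exact: (CV_mult _ _ _ _ a_wi a_wi).
Qed.

Lemma eclosed_vcvg_mem (C : vec n -> Prop) w p :
  eclosed C -> (forall k, C (w k)) -> vcvg w p -> C p.
Proof.
move=> C_cl wC wp; apply: C_cl => e e_gt0.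
have [|N wN] := @vcvg_sqnorm_sub _ _ p wp (e * e); first nra.
exists (w N); split => //; apply: dist_lt => //.
have := wN N (le_n N); rewrite sqnorm_sub_diag /Rdist Rminus_0_r.
by move/(Rle_lt_trans _ _ _ (Rle_abs _)).
Qed.

Lemma vcvg_cauchy w (eps : nat -> R) :
  Un_cv eps 0 -> (forall k m, sqnorm (vsub (w m) (w k)) <= eps k + eps m) ->
  exists p, vcvg w p.
Proof.
move=> eps0 w_cauchy.
suff /choice [p wp] : forall i, exists l, Un_cv (fun m => w m i) l by exists p.
move=> i; suff /R_complete [l wl] : Cauchy_crit (fun m => w m i) by exists l.
move=> e e_gt0; have [|N epsN] := eps0 (e * e / 2); first nra.
exists N => k m kN mN; rewrite /Rdist.
have := sqr_le_sqnorm (vsub (w m) (w k)) i; have := w_cauchy k m.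
have := epsN k kN; have := epsN m mN; rewrite /Rdist !Rminus_0_r /vsub /vadd /vscale.
move=> /(Rle_lt_trans _ _ _ (Rle_abs _)) em /(Rle_lt_trans _ _ _ (Rle_abs _)) ek wkm le_wkm.
by apply: Rabs_def1; nra.
Qed.

End VectorSequences.

Lemma minimizing_sequence (A : Type) (P : A -> Prop) (f : A -> R) :
  (exists a, P a) -> (forall a, P a -> 0 <= f a) ->
  exists d (w : nat -> A),
    [/\ forall a, P a -> d <= f a, forall k, P (w k) & Un_cv (fun k => f (w k)) d].
Proof.
move=> [a0 Pa0] f_ge0.
pose E s := exists a, P a /\ s = - f a.
have E_ub : bound E by exists 0 => _ [a [/f_ge0 ? ->]]; lra.
have E_ne : exists s, E s by exists (- f a0); exists a0.
have [m [m_ub m_lub]] := completeness E E_ub E_ne.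
have d_lb a : P a -> - m <= f a.
  by move=> Pa; have := m_ub (- f a) (ex_intro _ a (conj Pa erefl)); lra.
have d_approx k : exists a, P a /\ f a < - m + RinvN k.
  apply: NNPP => noa; suff : m <= m - RinvN k by have := cond_pos (RinvN k); lra.
  apply: m_lub => _ [a [Pa ->]].
  have : ~ (f a < - m + RinvN k) by move=> fa; apply: noa; exists a.
  lra.
have [w wk] := choice _ d_approx.
exists (- m), w; split=> [||e /RinvN_cv [N RN]] //; first by move=> k; case: (wk k).
exists N => k kN; have [Pwk fwk_lt] := wk k; have fwk_ge := d_lb _ Pwk.
have := RN k kN; have R_pos := cond_pos (RinvN k).
rewrite /Rdist Rminus_0_r !Rabs_pos_eq; lra.
Qed.

Lemma quadratic_ge0_lin_coef_ge0 a b :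
  (forall s, 0 < s -> s <= 1 -> 0 <= a * s + b * s * s) -> 0 <= a.
Proof.
move=> q_ge0; apply: Rnot_lt_le => a_lt0.
have b_le := Rle_abs b; have absb_ge0 := Rabs_pos b.
pose s := Rmin 1 (- a / (2 * (Rabs b + 1))).
have s_gt0 : 0 < s by apply: Rmin_glb_lt; [lra | apply: Rdiv_lt_0_compat; lra].
have s_small : s * (2 * (Rabs b + 1)) <= - a.
  have : - a / (2 * (Rabs b + 1)) * (2 * (Rabs b + 1)) = - a by field; lra.
  have := Rmin_r 1 (- a / (2 * (Rabs b + 1))); rewrite -/s; nra.
have := q_ge0 s s_gt0 (Rmin_l _ _); nra.
Qed.

Section ConeProjection.
Variables (n : nat) (C : vec n -> Prop).
Hypotheses (C_cone : convex_cone C) (C_closed : eclosed C).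

Lemma cone_nearest_point x :
  exists p, C p /\ forall q, C q -> sqnorm (vsub x p) <= sqnorm (vsub x q).
Proof.
have [C_ne [C_add C_scale]] := C_cone.
have [d [w [d_lb wC wd]]] :=
  @minimizing_sequence _ C (fun c => sqnorm (vsub x c)) C_ne (fun c _ => sqnorm_ge0 _).
pose eps k := 2 * (sqnorm (vsub x (w k)) - d).
have eps0 : Un_cv eps 0.
  rewrite -(Rmult_0_r 2) -(Rminus_diag d).
  exact: CV_mult (cvg_const _) (CV_minus _ _ _ _ wd (cvg_const _)).
have [|p wp] := @vcvg_cauchy _ w eps eps0.
  move=> k m; have mid_C : C (vscale (/2) (vadd (w m) (w k))).
    by apply: C_scale; [lra | exact: C_add].
  have := parallelogram x (w m) (w k); have := d_lb _ mid_C.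
  by rewrite /eps; lra.
exists p; split; first exact: eclosed_vcvg_mem C_closed wC wp.
by move=> q Cq; rewrite (UL_sequence _ _ _ (vcvg_sqnorm_sub x wp) wd); exact: d_lb.
Qed.

Lemma cone_separation x :
  ~ C x -> exists v, (forall c, C c -> 0 <= inner c v) /\ inner x v < 0.
Proof.
move=> xNC; have [_ [C_add C_scale]] := C_cone.
have [p [Cp p_min]] := cone_nearest_point x.
exists (vsub p x); split.
  move=> c Cc; suff : 0 <= 2 * inner c (vsub p x) by lra.
  apply: (@quadratic_ge0_lin_coef_ge0 _ (sqnorm c)) => s s_gt0 _.
  have := p_min _ (C_add _ _ Cp (C_scale _ _ (Rlt_le _ _ s_gt0) Cc)).
  have -> : sqnorm (vsub x (vadd p (vscale s c))) =
    sqnorm (vsub x p) + (2 * s) * inner c (vsub p x) + (s * s) * sqnorm c by inner_ring.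
  lra.
have p_ge : 0 <= - 2 * inner p (vsub p x).
  apply: (@quadratic_ge0_lin_coef_ge0 _ (sqnorm p)) => s _ s_le1.
  have := p_min _ (C_scale (1 - s) _ (ltac:(lra)) Cp).
  have -> : sqnorm (vsub x (vscale (1 - s) p)) =
    sqnorm (vsub x p) + (- 2 * s) * inner p (vsub p x) + (s * s) * sqnorm p by inner_ring.
  lra.
have -> : inner x (vsub p x) = inner p (vsub p x) + (-1) * sqnorm (vsub p x) by inner_ring.
have : sqnorm (vsub p x) <> 0 by move=> /sqnorm_sub_eq0 px; apply: xNC; rewrite -px.
have := sqnorm_ge0 (vsub p x); lra.
Qed.

End ConeProjection.

Section ConeSums.
Variables (n : nat) (D : vec n -> Prop) (phi : vec n -> R).
Hypotheses (D_cone : convex_cone D) (phi_lin : linear_on D phi).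

Lemma vsum_nil (I : Type) (F : I -> vec n) (y : vec n) : vsum [::] F = vscale 0 y.
Proof. by apply: functional_extensionality => j; rewrite /vsum big_nil /vscale; ring. Qed.

Lemma vsum_cons (I : Type) (a : I) (r : seq I) (F : I -> vec n) :
  vsum (a :: r) F = vadd (F a) (vsum r F).
Proof. by apply: functional_extensionality => j; rewrite /vsum big_cons. Qed.

Lemma cone_vsum_mem (I : Type) (r : seq I) (F : I -> vec n) :
  (forall i, D (F i)) -> D (vsum r F).
Proof.
have [[y Dy] [D_add D_scale]] := D_cone; move=> DF; elim: r => [|a r IH].
  by rewrite (vsum_nil _ y); apply: D_scale => //; lra.
by rewrite vsum_cons; apply: D_add.
Qed.

Lemma linear_on_vsum (I : Type) (r : seq I) (F : I -> vec n) :
  (forall i, D (F i)) -> phi (vsum r F) = \big[Rplus/R0]_(i <- r) phi (F i).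
Proof.
have [[y Dy] _] := D_cone; have [phi_add phi_scale] := phi_lin.
move=> DF; elim: r => [|a r IH].
  by rewrite (vsum_nil _ y) big_nil phi_scale //; [ring | lra].
by rewrite vsum_cons big_cons phi_add ?IH //; exact: cone_vsum_mem.
Qed.

End ConeSums.

Definition diff_quotient n (phi : vec n -> R) (y0 : vec n) (delta : R) : vec n :=
  fun i => (phi (vadd y0 (vscale delta (basis_vec i))) - phi y0) / delta.

Section LinearExtension.
Variables (n : nat) (D : vec n -> Prop) (phi : vec n -> R) (y0 : vec n) (delta : R).
Hypotheses (D_cone : convex_cone D) (phi_lin : linear_on D phi).
Hypotheses (delta_gt0 : 0 < delta) (D_y0 : D y0)
  (D_shift : forall i s, Rabs s = delta -> D (vadd y0 (vscale s (basis_vec i)))).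

Let x := diff_quotient phi y0 delta.

Lemma linear_on_shift i s :
  Rabs s = delta -> phi (vadd y0 (vscale s (basis_vec i))) = phi y0 + s * x i.
Proof.
have [phi_add phi_scale] := phi_lin.
have D_plus := D_shift i (Rabs_pos_eq _ (Rlt_le _ _ delta_gt0)).
rewrite /x /diff_quotient; case: (Rcase_abs s) => [s_lt0|s_ge0].
  rewrite Rabs_left // => s_delta; have -> : s = - delta by lra.
  have D_minus : D (vadd y0 (vscale (- delta) (basis_vec i))).
    by apply: D_shift; rewrite Rabs_Ropp Rabs_pos_eq //; lra.
  have := phi_add _ _ D_minus D_plus.
  have -> : vadd (vadd y0 (vscale (- delta) (basis_vec i)))
                 (vadd y0 (vscale delta (basis_vec i))) = vscale 2 y0.
    by apply: functional_extensionality => j; rewrite /vadd /vscale; ring.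
  rewrite phi_scale //; last lra.
  have delta_cancel c : - delta * (c / delta) = - c by field; lra.
  rewrite delta_cancel; lra.
by rewrite Rabs_right // => ->; field; lra.
Qed.

Lemma linear_on_eq_inner y : D y -> phi y = inner x y.
Proof.
move=> Dy; have [_ [_ D_scale]] := D_cone; have [phi_add phi_scale] := phi_lin.
pose s i := if Rle_dec 0 (y i) then delta else - delta.
have s_abs i : Rabs (s i) = delta.
  by rewrite /s; case: (Rle_dec 0 (y i)) => y_sgn /=; rewrite ?Rabs_Ropp Rabs_pos_eq //; lra.
pose a i := y i / s i.
have a_s i : a i * s i = y i.
  by rewrite /a /s; case: (Rle_dec 0 (y i)) => y_sgn /=; field; lra.
have a_ge0 i : 0 <= a i.
  have inv_gt0 := Rinv_0_lt_compat _ delta_gt0.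
  rewrite /a /s /Rdiv; case: (Rle_dec 0 (y i)) => y_sgn /=; first nra.
  by rewrite Rinv_opp; nra.
pose u i := vscale (a i) (vadd y0 (vscale (s i) (basis_vec i))).
have D_a_y0 i : D (vscale (a i) y0) by exact: D_scale.
have D_u i : D (u i) by apply: D_scale => //; exact: D_shift.
have decomp : vadd y (vsum (index_enum 'I_n) (fun i => vscale (a i) y0)) =
              vsum (index_enum 'I_n) u.
  apply: functional_extensionality => j; rewrite /vsum /u /vadd /vscale.
  under [in RHS]eq_bigr => i _ do rewrite Rmult_plus_distr_l -Rmult_assoc a_s.
  by rewrite big_split /= big_basis_vec Rplus_comm.
have phi_u i : phi (u i) = phi (vscale (a i) y0) + x i * y i.
  rewrite /u !phi_scale //; last exact: D_shift.
  by rewrite (linear_on_shift i (s_abs i)) -a_s; ring.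
have := f_equal phi decomp; rewrite phi_add //; last exact: cone_vsum_mem.
rewrite !(linear_on_vsum D_cone phi_lin) // (eq_bigr _ (fun i _ => phi_u i)) big_split /=.
by rewrite Rplus_comm => /Rplus_eq_reg_l.
Qed.

End LinearExtension.

Section Ball.
Variables (n : nat) (B : vec n -> Prop) (y0 : vec n) (eps : R).
Hypotheses (eps_gt0 : 0 < eps) (B_ball : forall y, Defs.dist y0 y < eps -> B y).

Lemma ball_center_mem : B y0.
Proof. by apply: B_ball; apply: dist_lt => //; rewrite sqnorm_sub_diag; nra. Qed.

Lemma ball_shift_mem t w : t * t * sqnorm w < eps * eps -> B (vadd y0 (vscale t w)).
Proof.
move=> tw_small; apply: B_ball; apply: dist_lt => //.
suff -> : sqnorm (vsub y0 (vadd y0 (vscale t w))) = (t * t) * sqnorm w by [].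
by inner_ring.
Qed.

Lemma ball_absorbing w : exists t, 0 < t /\ B (vadd y0 (vscale t w)).
Proof.
have w_ge0 := sqnorm_ge0 w; pose t := eps / (2 * (sqnorm w + 1)).
have t_def : t * (2 * (sqnorm w + 1)) = eps by rewrite /t; field; lra.
have t_gt0 : 0 < t by apply: Rdiv_lt_0_compat; lra.
by exists t; split => //; apply: ball_shift_mem; nra.
Qed.

End Ball.

Lemma eq_inner_on_shifts n (D : vec n -> Prop) (x x' y0 : vec n) (delta : R) :
  delta <> 0 -> D y0 -> (forall i, D (vadd y0 (vscale delta (basis_vec i)))) ->
  (forall y, D y -> inner x y = inner x' y) -> x = x'.
Proof.
move=> delta_neq0 D_y0 D_shift xx'; apply: functional_extensionality => i.
have := xx' _ (D_shift i); rewrite !inner_addr !inner_scaler !inner_basis xx' //.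
by move/Rplus_eq_reg_l/(Rmult_eq_reg_l _ _ _)/(_ delta_neq0).
Qed.

Lemma wlsc_inner_dual_ge0 n (C D : vec n -> Prop) (phi : vec n -> R) (x y0 v : vec n) t :
  wlsc C D phi -> (forall y, D y -> 0 <= phi y) -> (forall y, D y -> phi y = inner x y) ->
  (forall c, C c -> 0 <= inner c v) -> 0 < t -> D y0 -> D (vadd y0 (vscale t v)) ->
  0 <= inner x v.
Proof.
move=> phi_lsc phi_ge0 phi_x v_dual t_gt0 D_y0 D_z; apply: Rnot_lt_le => xv_lt0.
set z := vadd y0 (vscale t v) in D_z *.
have phi_z : phi z = phi y0 + t * inner x v by rewrite !phi_x // inner_addr inner_scaler.
have [_ /(_ y0) [|l [l_sub [l_y0 l_nbhd]]]] := phi_lsc (phi z) (phi_ge0 _ D_z).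
  by split => //; nra.
have [_] : D z /\ phi z < phi z; last exact: Rlt_irrefl.
apply: l_nbhd => // q lq; have [Cq _] := l_sub q lq.
have := l_y0 q lq; have := v_dual _ Cq; rewrite /z inner_addr inner_scaler; nra.
Qed.

Theorem mainTheorem8 (n : nat) (C D : vec n -> Prop)
  (hCc : convex_cone C) (hDc : convex_cone D)
  (hCcl : eclosed C) (hDcl : eclosed D)
  (hCi : has_interior C) (hDi : has_interior D)
  (hdual : forall c d, C c -> D d -> (0 <= inner c d))
  (phi : vec n -> R)
  (hpos : forall y, D y -> (0 <= phi y))
  (hlin : linear_on D phi)
  (hlsc : wlsc C D phi) :
  exists! x : vec n, C x /\ forall y, D y -> phi y = inner x y.
Proof.
have [y0 [eps [eps_gt0 D_ball]]] := hDi.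
have D_y0 := ball_center_mem eps_gt0 D_ball.
have D_shift i s : Rabs s = eps / 2 -> D (vadd y0 (vscale s (basis_vec i))).
  move=> s_abs; apply: (ball_shift_mem eps_gt0 D_ball).
  by rewrite sqnorm_basis Rmult_1_r; have := Rsqr_abs s; rewrite /Rsqr s_abs => ->; nra.
have phi_x := linear_on_eq_inner hDc hlin (ltac:(lra) : 0 < eps / 2) D_y0 D_shift.
exists (diff_quotient phi y0 (eps / 2)); split.
  split => //; apply: NNPP => x_notin_C.
  have [v [v_dual xv_lt0]] := cone_separation hCc hCcl x_notin_C.
  have [t [t_gt0 D_yt]] := ball_absorbing eps_gt0 D_ball v.
  by have := wlsc_inner_dual_ge0 hlsc hpos phi_x v_dual t_gt0 D_y0 D_yt; lra.
move=> x' [_ phi_x'].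
apply: (eq_inner_on_shifts (D := D) (y0 := y0) (delta := eps / 2)) => // [|i|y Dy].
- by apply: Rgt_not_eq; lra.
- by apply: D_shift; rewrite Rabs_pos_eq; lra.
- by rewrite -phi_x // -phi_x'.
Qed.
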